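(* Let $q'>0$, $e'\in(0,1)$, $q_{\max}>0$. There is no $(q,\omega')\in\mathcal D_6$ such that the orbits are linked for every $(e,\omega)\in\mathcal D_5$.
   Context: For $q>0$, $e\in[0,1]$ and angles $\omega,\omega'$, define $r_{\pm}=\frac{q(1+e)}{1\pm e\cos\omega}$, $r'_{\pm}=\frac{q'(1+e')}{1\pm e'\cos\omega'}$ (extended-real values allowed), $d^+=r'_+-r_+$, $d^-=r'_--r_-$. Linked orbits: $d^+d^-<0$. $\mathcal D_5=\{(e,\omega):0\le e\le1,\ 0\le\omega\le\pi\}$, $\mathcal D_6=\{(q,\omega'):0<q\le q_{\max},\ 0\le\omega'\le\pi/2\}$. *)

From Stdlib Require Import Reals.
Open Scope R_scope.

(* Extended reals needed here: finite values or +infinity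
   (the radii r_{+-} = q(1+e)/(1 +- e cos w) are >= 0 denominators for e in [0,1],
   and become +infinity exactly when the denominator vanishes). *)
Inductive ER : Type := ERfin (x : R) | ERpinf.

Definition ER_lt (a b : ER) : Prop :=
  match a, b with
  | ERfin x, ERfin y => x < y
  | ERfin _, ERpinf => True
  | ERpinf, _ => False
  end.

Definition rad (q e den : R) : ER :=
  if Req_EM_T den 0 then ERpinf else ERfin (q * (1 + e) / den).

Definition r_plus (q e w : R) : ER := rad q e (1 + e * cos w).
Definition r_minus (q e w : R) : ER := rad q e (1 - e * cos w).

(* d^+ = r'_+ - r_+ ,  d^- = r'_- - r_- ; linked iff d^+ d^- < 0, i.e. the two
   differences are nonzero with opposite signs.  "a - b < 0" is ER_lt a b. *)
Definition linked (q e w q' e' w' : R) : Prop :=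
  (ER_lt (r_plus q' e' w') (r_plus q e w) /\ ER_lt (r_minus q e w) (r_minus q' e' w'))
  \/
  (ER_lt (r_plus q e w) (r_plus q' e' w') /\ ER_lt (r_minus q' e' w') (r_minus q e w)).

Definition D5 (e w : R) : Prop := 0 <= e <= 1 /\ 0 <= w <= PI.
Definition D6 (qmax q w' : R) : Prop := 0 < q <= qmax /\ 0 <= w' <= PI / 2.

(* The circular orbit (e = 0) of pericentre distance q has r_+ = r_- = q, so it
   is linked with the fixed orbit only if r'_+ < q < r'_-; here cos w' >= 0
   forces r'_+ <= r'_-, which rules out the other sign pattern.  The parabolic
   orbit (e = 1, w = 0) with the same q has r_+ = q and r_- = +oo, so it is
   linked only if q < r'_+.  Both cannot hold. *)
From Stdlib Require Import Reals Lra.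
Open Scope R_scope.

Lemma rad_neq0 q e d : d <> 0 -> rad q e d = ERfin (q * (1 + e) / d).
Proof. intros Hd. unfold rad. destruct (Req_EM_T d 0); [contradiction | reflexivity]. Qed.

Lemma rad_0 q e : rad q e 0 = ERpinf.
Proof. unfold rad. destruct (Req_EM_T 0 0); [reflexivity | contradiction]. Qed.

Lemma r_plus_circle q w : r_plus q 0 w = ERfin q.
Proof. unfold r_plus. rewrite rad_neq0 by lra. f_equal. field. Qed.

Lemma r_minus_circle q w : r_minus q 0 w = ERfin q.
Proof. unfold r_minus. rewrite rad_neq0 by lra. f_equal. field. Qed.

Lemma r_plus_parabola q : r_plus q 1 0 = ERfin q.
Proof. unfold r_plus. rewrite cos_0, rad_neq0 by lra. f_equal. field. Qed.

Lemma r_minus_parabola q : r_minus q 1 0 = ERpinf.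
Proof. unfold r_minus. rewrite cos_0. replace (1 - 1 * 1) with 0 by ring. apply rad_0. Qed.

Section EllipticOrbit.

Variables q e w : R.
Hypothesis he : 0 <= e < 1.

Let e_cos_bound : -1 < e * cos w < 1.
Proof. pose proof (COS_bound w). split; nra. Qed.

Lemma r_plus_elliptic : r_plus q e w = ERfin (q * (1 + e) / (1 + e * cos w)).
Proof. unfold r_plus. apply rad_neq0. lra. Qed.

Lemma r_minus_elliptic : r_minus q e w = ERfin (q * (1 + e) / (1 - e * cos w)).
Proof. unfold r_minus. apply rad_neq0. lra. Qed.

Lemma r_plus_le_r_minus_elliptic :
  0 < q -> 0 <= cos w ->
  q * (1 + e) / (1 + e * cos w) <= q * (1 + e) / (1 - e * cos w).
Proof.
  intros Hq Hc. unfold Rdiv.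
  apply Rmult_le_compat_l; [nra |].
  apply Rinv_le_contravar; nra.
Qed.

End EllipticOrbit.

Lemma linked_circle q w q' e' w' a b :
  r_plus q' e' w' = ERfin a -> r_minus q' e' w' = ERfin b -> a <= b ->
  linked q 0 w q' e' w' -> a < q < b.
Proof.
  unfold linked. rewrite r_plus_circle, r_minus_circle. intros -> -> Hab.
  simpl. lra.
Qed.

Lemma linked_parabola q q' e' w' a b :
  r_plus q' e' w' = ERfin a -> r_minus q' e' w' = ERfin b ->
  linked q 1 0 q' e' w' -> q < a.
Proof.
  unfold linked. rewrite r_plus_parabola, r_minus_parabola. intros -> ->.
  simpl. tauto.
Qed.

Theorem mainTheorem16 (q' e' qmax : R)
  (hq' : 0 < q') (he' : 0 < e' < 1) (hqmax : 0 < qmax) :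
  ~ (exists q w', D6 qmax q w' /\
       forall e w, D5 e w -> linked q e w q' e' w').
Proof.
  intros [q [w' [[_ Hw'] Hlinked]]].
  assert (he'01 : 0 <= e' < 1) by lra.
  assert (Hcos : 0 <= cos w') by (apply cos_ge_0; lra).
  assert (HD5 : forall e, 0 <= e <= 1 -> D5 e 0)
    by (intros e He; split; [exact He | pose proof PI_RGT_0; lra]).
  pose proof (r_plus_le_r_minus_elliptic q' e' w' he'01 hq' Hcos) as Hab.
  pose proof (linked_circle q 0 q' e' w' _ _
    (r_plus_elliptic q' e' w' he'01) (r_minus_elliptic q' e' w' he'01) Hab
    (Hlinked 0 0 (HD5 0 ltac:(lra)))) as Hcircle.
  pose proof (linked_parabola q q' e' w' _ _
    (r_plus_elliptic q' e' w' he'01) (r_minus_elliptic q' e' w' he'01)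
    (Hlinked 1 0 (HD5 1 ltac:(lra)))) as Hparabola.
  lra.
Qed.
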